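(* Let $a,b$ be real constants with $|a|,|b|\le 0.01$ and define, for real $x>1$, \[f(x)=\frac{(x+a)(x+1)+2b-2\sqrt{x^3+ax+b}\,\sqrt{1+a+b}}{(1-x)^2}.\] Then $f(x)\ge 0.19$ for all $x>1$. *)

From Stdlib Require Import Reals.
Open Scope R_scope.

Definition f_ab (a b x : R) : R :=
  ((x + a) * (x + 1) + 2 * b
   - 2 * sqrt (x ^ 3 + a * x + b) * sqrt (1 + a + b)) / (1 - x) ^ 2.

(* With t = x - 1, write the numerator of f as N = 2v + (3+a)t + t^2 and
   x^3 + ax + b = v + (3+a)t + 3t^2 + t^3, where v = 1 + a + b.  Then
   f(x) >= c amounts to P := N - c t^2 >= 2 sqrt(x^3+ax+b) sqrt v, and
   P^2 - 4(x^3+ax+b)v = t^2 (K + L t + (1-c)^2 t^2) with K, L depending only on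
   a, b, c.  For |a|, |b| <= 1/100 and c = 19/100 both K and L are positive,
   so P dominates the product of square roots. *)
From Stdlib Require Import Reals Lra Psatz.
Open Scope R_scope.

Lemma Rabs_le_between (x r : R) : Rabs x <= r -> - r <= x <= r.
Proof.
  intros h. pose proof (Rle_abs x). pose proof (Rle_abs (- x)).
  rewrite Rabs_Ropp in *. lra.
Qed.

Lemma two_sqrt_mul_le (u v p : R) :
  0 <= u -> 0 <= v -> 0 <= p -> 4 * u * v <= p ^ 2 -> 2 * sqrt u * sqrt v <= p.
Proof.
  intros hu hv hp hle.
  assert (hsq : (sqrt u * sqrt v) ^ 2 = u * v).
  { replace ((sqrt u * sqrt v) ^ 2) with ((sqrt u * sqrt u) * (sqrt v * sqrt v))
      by ring.
    now rewrite !sqrt_sqrt. }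
  assert (h0 : 0 <= sqrt u * sqrt v) by (apply Rmult_le_pos; apply sqrt_pos).
  nra.
Qed.

Lemma le_div_sqr (c n d : R) : d <> 0 -> c * d ^ 2 <= n -> c <= n / d ^ 2.
Proof.
  intros hd hle.
  assert (hd2 : 0 < d ^ 2) by (rewrite <- Rsqr_pow2; apply Rsqr_pos_lt, hd).
  apply (Rmult_le_reg_r (d ^ 2)); [exact hd2|].
  unfold Rdiv. rewrite Rmult_assoc, Rinv_l, Rmult_1_r; lra.
Qed.

Lemma f_ab_numerator_discriminant (a b c x : R) :
  ((x + a) * (x + 1) + 2 * b - c * (x - 1) ^ 2) ^ 2
    - 4 * (x ^ 3 + a * x + b) * (1 + a + b)
  = (x - 1) ^ 2 * ((3 + a) ^ 2 - 4 * (2 + c) * (1 + a + b)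
                   + (2 * (3 + a) * (1 - c) - 4 * (1 + a + b)) * (x - 1)
                   + (1 - c) ^ 2 * (x - 1) ^ 2).
Proof. ring. Qed.

Lemma f_ab_ge (a b c : R) :
  c <= 1 -> 0 <= 3 + a -> 0 < 1 + a + b ->
  0 <= (3 + a) ^ 2 - 4 * (2 + c) * (1 + a + b) ->
  0 <= 2 * (3 + a) * (1 - c) - 4 * (1 + a + b) ->
  forall x : R, 1 < x -> c <= f_ab a b x.
Proof.
  intros hc ha hv hK hL x hx.
  set (t := x - 1).
  assert (ht : 0 < t) by (unfold t; lra).
  assert (hxt : x = 1 + t) by (unfold t; lra).
  assert (hu : 0 <= x ^ 3 + a * x + b).
  { rewrite hxt. nra. }
  assert (hP : 0 <= (x + a) * (x + 1) + 2 * b - c * t ^ 2).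
  { rewrite hxt. nra. }
  assert (hdisc : 4 * (x ^ 3 + a * x + b) * (1 + a + b)
                  <= ((x + a) * (x + 1) + 2 * b - c * t ^ 2) ^ 2).
  { pose proof (f_ab_numerator_discriminant a b c x) as hid. fold t in hid.
    assert (0 <= t ^ 2 * ((3 + a) ^ 2 - 4 * (2 + c) * (1 + a + b)
                          + (2 * (3 + a) * (1 - c) - 4 * (1 + a + b)) * t
                          + (1 - c) ^ 2 * t ^ 2)).
    { apply Rmult_le_pos; [apply pow2_ge_0|].
      apply Rplus_le_le_0_compat; [apply Rplus_le_le_0_compat|].
      - exact hK.
      - apply Rmult_le_pos; lra.
      - apply Rmult_le_pos; apply pow2_ge_0. }
    lra. }
  pose proof (two_sqrt_mul_le _ _ _ hu (Rlt_le _ _ hv) hP hdisc) as hsqrt.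
  unfold f_ab. apply le_div_sqr; [lra|].
  replace ((1 - x) ^ 2) with (t ^ 2) by (unfold t; ring).
  lra.
Qed.

Theorem lemmaA1 (a b : R) (ha : Rabs a <= 1/100) (hb : Rabs b <= 1/100) :
  forall x : R, 1 < x -> f_ab a b x >= 19/100.
Proof.
  intros x hx. apply Rle_ge.
  apply Rabs_le_between in ha. apply Rabs_le_between in hb.
  apply f_ab_ge; [lra | lra | lra | nra | nra | exact hx].
Qed.
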